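(* Let $H\subseteq G$ be finite groups such that $H$ contains a Sylow $p$-subgroup of $G$, and let $N=O_p(H)$. Let $M$ be a projective $FG$-module with socle $S$. Let $D=\mathrm{soc}\,\overline{S}_{H/N}$, where $\overline{S}_{H/N}=C_S(N)$ viewed as an $F(H/N)$-module, and let $M'$ be a projective $F(H/N)$-module with socle $D$. Then $\overline{M}_{H/N}=C_M(N)$ (viewed as an $F(H/N)$-module) contains a submodule isomorphic to $M'$. In addition $c_M\ge c_{M'}$, where $c_M=\dim M/|G|_p$ and $c_{M'}=\dim M'/|H/N|_p$.
   Context: $p$ is a prime and $F$ an algebraically closed field of characteristic $p$. For a finite group $X$, $|X|_p$ is the order of a Sylow $p$-subgroup. For an $FX$-module $M$ and a subgroup $K$, $C_M(K)=\{m\in M: km=m\ \forall k\in K\}$; if $K\trianglelefteq H$, then $C_M(K)$ is an $F(H/K)$-module. A projective module is determined up to isomorphism by its socle. *)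

From HB Require Import structures.
From mathcomp Require Import all_boot all_order all_algebra all_fingroup all_solvable.
From mathcomp Require Import mxrepresentation.
Set Implicit Arguments. Unset Strict Implicit. Unset Printing Implicit Defensive.
Import GRing.Theory.
Local Open Scope ring_scope.

Section ProjSoc.
Variables (F : fieldType) (gT : finGroupType) (G : {group gT}).

(* Homomorphisms act on row
   vectors by right multiplication. *)
Definition mx_projective n (rG : mx_representation F G n) : Prop :=
  forall m1 m2 (rA : mx_representation F G m1) (rB : mx_representation F G m2)
         (f : 'M[F]_(m1, m2)) (g : 'M[F]_(n, m2)),
    (forall x, x \in G -> rA x *m f = f *m rB x) ->
    (forall x, x \in G -> rG x *m g = g *m rB x) ->
    row_full f ->
    exists2 h : 'M[F]_(n, m1),
      (forall x, x \in G -> rG x *m h = h *m rA x) & h *m f = g.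

Definition mxsocle n (rG : mx_representation F G n) (U S : 'M[F]_n) : Prop :=
  [/\ inhabited (mxsemisimple rG S), (S <= U)%MS &
      forall V : 'M[F]_n, mxsimple rG V -> (V <= U)%MS -> (V <= S)%MS].

Lemma mxsocle_module n (rG : mx_representation F G n) (U S : 'M[F]_n) :
  mxsocle rG U S -> mxmodule rG S.
Proof. by case=> [[ssS] _ _]; apply: mxsemisimple_module. Qed.

End ProjSoc.

Section FixQuo.
Variables (F : fieldType) (gT : finGroupType) (G H N : {group gT}) (n : nat).
Variables (rG : mx_representation F G n) (sHG : H \subset G) (nsNH : (N <| H)%g).
Local Notation rH := (subg_repr rG sHG).
Variables (U : 'M[F]_n) (modU : mxmodule rG U).

Definition fixmx := (U :&: rfix_mx rH N)%MS.

Lemma fixmx_module : mxmodule rH fixmx.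
Proof.
apply: capmx_module; last exact: normal_rfix_mx_module.
by rewrite /mxmodule rstabs_subg subsetI subxx (subset_trans sHG modU).
Qed.

Lemma fixmx_ker : N \subset rker (submod_repr fixmx_module).
Proof.
rewrite /rker rstab_submod rfix_mx_rstabC ?normal_sub //.
by rewrite val_submod1 capmxSr.
Qed.

Definition fixquo := quo_repr fixmx_ker (normal_norm nsNH).

End FixQuo.

From HB Require Import structures.
From mathcomp Require Import all_boot all_order all_algebra all_fingroup all_solvable.
From mathcomp Require Import mxrepresentation zify.
Set Implicit Arguments. Unset Strict Implicit. Unset Printing Implicit Defensive.
Import GRing.Theory.
Local Open Scope ring_scope.

(* Let N = O_p(H) and n = dim M.  Everything rests on two properties of a
   projective FG-module M, both obtained by exhibiting M as a direct summand
   of the free module X = F^n (x) FG (the augmentation X -> M is onto and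
   splits by projectivity):
   (1) M is injective relative to every subgroup K of G: a K-homomorphism
       A -> M extends along every K-monomorphism A -> B.  For X this holds
       because a vector of X is determined by its components at the elements
       of G, which can be prescribed on a transversal of K.
   (2) |Q| * dim C_M(Q) <= dim M for every p-subgroup Q of G.  Indeed
       dim C_X(Q) <= n |G : Q|, while every FQ-module U satisfies
       dim U <= |Q| dim C_U(Q) (induction along maximal subgroups, on whose
       fixed points x - 1 is nilpotent of order p); applying the latter to
       the complement of M in X leaves room only for the stated bound.
   For the theorem, soc M' ~ D <= C_S(N) <= M is an H-map defined on soc M';
   by (1) it extends to psi : M' -> M, injective because it is injective on
   the socle, with image in C_M(N) because N acts trivially on M'.  This is
   the required submodule, and (2) for Q = N together with
   |G|_p = |H|_p = |N| |H/N|_p gives c_M >= c_M'. *)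

(* [lin1_mx f] computes f, for f given with an explicit linearity equation
   rather than a declared linear structure. *)
Section LinearFun.
Variables (F : fieldType) (m n : nat) (f : 'rV[F]_m -> 'rV[F]_n).
Hypothesis f_linear : forall a u v, f (a *: u + v) = a *: f u + f v.

Let f_is_linear : linear f. Proof. by move=> a u v; rewrite f_linear. Qed.
HB.instance Definition _ := GRing.isLinear.Build F _ _ _ f f_is_linear.

Lemma mul_rV_lin1_fun u : u *m lin1_mx f = f u.
Proof. exact: mul_rV_lin1. Qed.

End LinearFun.

Lemma kermx_hom_mxmodule (F : fieldType) (gT : finGroupType) (G : {group gT})
    a b (rA : mx_representation F G a) (rB : gT -> 'M[F]_b) (f : 'M_(a, b)) :
  {in G, forall x, rA x *m f = f *m rB x} -> mxmodule rA (kermx f).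
Proof.
move=> hom_f; apply/mxmoduleP=> x Gx; apply/sub_kermxP.
by rewrite -mulmxA hom_f // mulmxA mulmx_ker mul0mx.
Qed.

Lemma hom_mx_comp (F : fieldType) (gT : finGroupType) (K : {set gT}) a b c
    (rA : gT -> 'M[F]_a) (rB : gT -> 'M[F]_b) (rC : gT -> 'M[F]_c)
    (f : 'M[F]_(a, b)) (g : 'M[F]_(b, c)) :
    {in K, forall x, rA x *m f = f *m rB x} ->
    {in K, forall x, rB x *m g = g *m rC x} ->
  {in K, forall x, rA x *m (f *m g) = f *m g *m rC x}.
Proof. by move=> hom_f hom_g x Kx; rewrite mulmxA hom_f // -mulmxA hom_g // mulmxA. Qed.

Section FreeModule.
Variables (F : fieldType) (gT : finGroupType) (G : {group gT}) (n : nat).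
Local Notation nG := #|pred_of_set G|.
Local Notation R := (regular_repr F G).

(* The free FG-module X = F^n (x) FG of rank n: a vector is an n x |G| matrix
   (flattened by mxvec) with columns indexed by G, on which x acts by right
   multiplication by the regular representation. *)
Definition free_mx (x : gT) : 'M[F]_(n * nG) := lin_mx (mulmxr (R x)).

Lemma free_mx_repr : mx_repr G free_mx.
Proof.
split=> [|x y Gx Gy].
  apply/row_matrixP=> i; rewrite !rowE mul_rV_lin /= repr_mx1 mulmx1.
  by rewrite mulmx1 vec_mxK.
apply/row_matrixP=> i; rewrite !rowE mulmxA !mul_rV_lin /= mxvecK.
by rewrite repr_mxM // mulmxA.
Qed.
Canonical free_repr := MxRepresentation free_mx_repr.

Lemma gring_index_eq (j : 'I_nG) g : g \in G ->
  (j == gring_index G g) = (enum_val j == g).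
Proof.
move=> Gg; apply/eqP/eqP=> [->|<-]; first by rewrite gring_indexK.
by rewrite gring_valK.
Qed.

Lemma col_mul_regular (A : 'M[F]_(n, nG)) x j : x \in G ->
  col j (A *m R x) = col (gring_index G (enum_val j * x^-1)) A.
Proof.
move=> Gx; rewrite !colE -mulmxA; congr (A *m _).
apply/matrixP=> i k; rewrite ord1 mxE (bigD1 j) //= big1 => [|l nlj]; last first.
  by rewrite !mxE (negbTE nlj) andFb mulr0.
rewrite /regular_mx !mxE !eqxx !andbT mulr1 addr0 /=.
have Gj := enum_valP j; have Gi := enum_valP i.
rewrite !gring_index_eq ?groupM ?groupV //; congr (_%:R).
by rewrite eq_sym (canF_eq (mulgK x)).
Qed.

(* The g-component of a vector of X, a vector of F^n; locked to keep the
   terms small. *)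
Definition free_comp (g : gT) (u : 'rV[F]_(n * nG)) : 'rV[F]_n :=
  locked (col (gring_index G g) (vec_mx u))^T.

Lemma free_comp_linear g a u v :
  free_comp g (a *: u + v) = a *: free_comp g u + free_comp g v.
Proof. by rewrite /free_comp -!lock !linearP. Qed.

Lemma free_compJ u x g : x \in G -> g \in G ->
  free_comp g (u *m free_mx x) = free_comp (g * x^-1)%g u.
Proof.
move=> Gx Gg; rewrite /free_comp -!lock mul_rV_lin /= mxvecK col_mul_regular //.
by rewrite gring_indexK.
Qed.

Lemma free_comp_inj u v :
  (forall g, g \in G -> free_comp g u = free_comp g v) -> u = v.
Proof.
move=> euv; apply: (can_inj vec_mxK); apply: trmx_inj.
apply/row_matrixP=> j; rewrite -!tr_col.
by have := euv _ (enum_valP j); rewrite /free_comp -!lock gring_valK.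
Qed.

(* Write g = tr g * kr g with
   tr g a fixed representative of g K and kr g in K; a K-map phi : A -> X
   extends along a K-monomorphism i : A -> B with left inverse J by
   sending v to the vector whose g-component is the (tr g)-component of
   phi (J (v (kr g)^-1)). *)
Section RelativeInjectivity.
Variables (K : {group gT}) (sKG : K \subset G) (a b : nat).
Variables (rA : mx_representation F K a) (rB : mx_representation F K b).
Variables (i : 'M[F]_(a, b)) (phi : 'M[F]_(a, n * nG)).
Hypotheses (free_i : row_free i)
  (hom_i : {in K, forall x, rA x *m i = i *m rB x})
  (hom_phi : {in K, forall x, rA x *m phi = phi *m free_mx x}).

Let tr (g : gT) := repr (g *: K)%g.
Let kr (g : gT) := ((tr g)^-1 * g)%g.

Let tr_in g : tr g \in (g *: K)%g.
Proof. exact/mem_repr/lcoset_refl. Qed.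

Let kr_in g : kr g \in K.
Proof.
by rewrite /kr; case/lcosetP: (tr_in g) => y Ky ->; rewrite invMg mulgKV groupV.
Qed.

Let tr_G g : g \in G -> tr g \in G.
Proof.
move=> Gg; case/lcosetP: (tr_in g) => y Ky ->.
by rewrite groupM // (subsetP sKG).
Qed.

Let tr_shift g y : y \in K -> tr (g * y^-1)%g = tr g.
Proof. by move=> Ky; rewrite /tr lcosetM lcoset_id ?groupV. Qed.

Let kr_shiftV g y : y \in K -> (kr (g * y^-1))^-1%g = (y * (kr g)^-1)%g.
Proof. by move=> Ky; rewrite /kr tr_shift // mulgA invMg invgK. Qed.

Let tr_kr g : (tr g * kr g)%g = g.
Proof. by rewrite /kr mulKVg. Qed.

Let ext_fun (J : 'M[F]_(b, a)) (v : 'rV[F]_b) : 'rV[F]_(n * nG) :=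
  mxvec (\matrix_(r, j) free_comp (tr (enum_val j))
           (v *m rB (kr (enum_val j))^-1%g *m J *m phi) 0 r).

Let free_comp_ext J v g : g \in G ->
  free_comp g (ext_fun J v) = free_comp (tr g) (v *m rB (kr g)^-1%g *m J *m phi).
Proof.
move=> Gg; rewrite /ext_fun {1}/free_comp -lock mxvecK; apply/rowP=> r.
by rewrite !mxE gring_indexK.
Qed.

Let ext_fun_linear J c u v :
  ext_fun J (c *: u + v) = c *: ext_fun J u + ext_fun J v.
Proof.
rewrite /ext_fun -linearP /=; congr mxvec; apply/matrixP=> r j.
by rewrite mxE !mulmxDl -!scalemxAl free_comp_linear !mxE.
Qed.

Lemma free_rel_injective : exists2 psi : 'M[F]_(b, n * nG),
  {in K, forall x, rB x *m psi = psi *m free_mx x} & i *m psi = phi.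
Proof.
have [J iJ] := row_freeP free_i.
have extE := mul_rV_lin1_fun (ext_fun_linear J).
exists (lin1_mx (ext_fun J)) => [x Kx|].
  have Gx := subsetP sKG x Kx.
  apply/row_matrixP=> r; rewrite !rowE !mulmxA !extE.
  apply: free_comp_inj => g Gg; rewrite free_compJ // !free_comp_ext ?groupM ?groupV //.
  by rewrite tr_shift // kr_shiftV // repr_mxM ?groupV ?kr_in // !mulmxA.
apply/row_matrixP=> r; rewrite !rowE mulmxA extE.
apply: free_comp_inj => g Gg; rewrite free_comp_ext //.
rewrite -[_ *m i *m _]mulmxA -hom_i ?groupV ?kr_in // mulmxA.
rewrite -[_ *m i *m J]mulmxA iJ mulmx1 -mulmxA hom_phi ?groupV ?kr_in //.
by rewrite mulmxA free_compJ ?tr_G ?invgK ?tr_kr // groupV (subsetP sKG) ?kr_in.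
Qed.

End RelativeInjectivity.

(* The augmentation X -> M of a module M = F^n with action rG, sending
   e (x) g to e rG(g); it is an onto G-homomorphism. *)
Section Augmentation.
Variable rG : mx_representation F G n.

Definition aug_fun (u : 'rV[F]_(n * nG)) : 'rV[F]_n :=
  \sum_(j < nG) free_comp (enum_val j) u *m rG (enum_val j).

Lemma aug_fun_linear c u v : aug_fun (c *: u + v) = c *: aug_fun u + aug_fun v.
Proof.
rewrite /aug_fun scaler_sumr -big_split; apply: eq_bigr => j _.
by rewrite free_comp_linear mulmxDl scalemxAl.
Qed.

Definition aug_mx := lin1_mx aug_fun.

Lemma aug_mxE u : u *m aug_mx = aug_fun u.
Proof. exact: mul_rV_lin1_fun aug_fun_linear u. Qed.

Lemma aug_mx_hom x : x \in G -> free_mx x *m aug_mx = aug_mx *m rG x.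
Proof.
move=> Gx; apply/row_matrixP=> r; rewrite !rowE !mulmxA !aug_mxE.
pose s (j : 'I_nG) := gring_index G (enum_val j * x^-1)%g.
have s_inj : injective s.
  move=> j1 j2 /(congr1 (@enum_val _ (pred_of_set G))).
  rewrite !gring_indexK ?groupM ?groupV ?enum_valP //.
  by move/mulIg/enum_val_inj.
rewrite /aug_fun mulmx_suml [RHS](reindex_inj s_inj); apply: eq_bigr => j _.
have Gj := enum_valP j.
rewrite free_compJ // /s gring_indexK ?groupM ?groupV //.
by rewrite -mulmxA -repr_mxM ?groupM ?groupV // mulgKV.
Qed.

(* Onto, since e (x) 1 is sent to e. *)
Lemma aug_mx_full : row_full aug_mx.
Proof.
apply/row_fullP; pose e i := delta_mx i (gring_index G 1%g) : 'M[F]_(n, nG).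
exists (\matrix_(i < n) mxvec (e i)).
apply/row_matrixP=> i; rewrite row_mul rowK aug_mxE /aug_fun.
rewrite (bigD1 (gring_index G 1%g)) //= big1 => [|j nj]; last first.
  rewrite /free_comp -lock mxvecK colE gring_valK mul_delta_mx_cond.
  by rewrite eq_sym (negbTE nj) mulr0n trmx0 mul0mx.
rewrite addr0 !(@gring_indexK _ G 1%g) // repr_mx1 mulmx1.
by rewrite /free_comp -lock mxvecK colE mul_delta_mx trmx_delta rowE mulmx1.
Qed.

Lemma proj_free_summand : mx_projective rG ->
  exists2 h : 'M[F]_(n, n * nG),
    {in G, forall x, rG x *m h = h *m free_mx x} & h *m aug_mx = 1%:M.
Proof.
move=> projM; have hom1 x : x \in G -> rG x *m 1%:M = 1%:M *m rG x.
  by rewrite mulmx1 mul1mx.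
have [h hom_h hK] := projM _ _ free_repr rG aug_mx 1%:M aug_mx_hom hom1 aug_mx_full.
by exists h.
Qed.

End Augmentation.

(* dim C_X(N) <= n |G : N|: a vector fixed by N is determined by its
   components at a set T of representatives of the left cosets of N. *)
Section FreeFixedPoints.
Variables (N : {group gT}) (sNG : N \subset G).

Let T := [set repr (g *: N)%g | g in G].

Let card_T : (#|T| <= #|G : N|%g)%N.
Proof.
rewrite -card_lcosets /T /lcosets.
have -> : [set repr (g *: N)%g | g in G] =
          [set repr C | C in [set lcoset N x | x in G]].
  by rewrite -imset_comp; apply: eq_imset => g; rewrite /= lcosetE.
exact: leq_imset_card.
Qed.

Let restr_fun (u : 'rV[F]_(n * nG)) : 'rV[F]_(n * #|T|) :=
  mxvec (\matrix_(r, j) free_comp (enum_val j) u 0 r).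

Let restr_fun_linear c u v :
  restr_fun (c *: u + v) = c *: restr_fun u + restr_fun v.
Proof.
rewrite /restr_fun -linearP /=; congr mxvec; apply/matrixP=> r j.
by rewrite mxE free_comp_linear !mxE.
Qed.

(* On C_X(N) these components determine v, since v = v y for y in N
   relates the components at g and g y. *)
Let restr_fix_inj v : (v <= rfix_mx free_repr N)%MS ->
  restr_fun v = 0 -> v = 0.
Proof.
move=> /rfix_mxP fix_v v0.
have compT t : t \in T -> free_comp t v = 0.
  have M0 : (\matrix_(r < n, j < #|T|) free_comp (enum_val j) v 0 r) = 0.
    by apply/eqP; rewrite -mxvec_eq0 -/(restr_fun v) v0.
  move=> Tt; apply/rowP=> r; move/matrixP: M0 => /(_ r (enum_rank_in Tt t)).
  by rewrite !mxE enum_rankK_in.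
apply: free_comp_inj => g Gg.
have Tg : repr (g *: N)%g \in T by apply: imset_f.
case/lcosetP: (mem_repr _ (lcoset_refl N g)) (compT _ Tg) => y Ny ->.
have Gy := subsetP sNG y Ny.
rewrite -{1}(fix_v y) // free_compJ ?groupM // mulgK => ->.
by rewrite /free_comp -lock; apply/rowP=> r; rewrite !mxE.
Qed.

Lemma free_rfix_rank : (\rank (rfix_mx free_repr N) <= n * #|G : N|%g)%N.
Proof.
set A := rfix_mx free_repr N.
have restrE := mul_rV_lin1_fun restr_fun_linear.
rewrite -(mxrank_mul_ker A (lin1_mx restr_fun)).
have -> : (A :&: kermx (lin1_mx restr_fun))%MS = 0.
  apply/row_matrixP=> i; rewrite row0; apply: restr_fix_inj.
    exact: submx_trans (row_sub _ _) (capmxSl _ _).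
  rewrite -restrE; apply/sub_kermxP.
  exact: submx_trans (row_sub _ _) (capmxSr _ _).
by rewrite mxrank0 addn0 (leq_trans (rank_leq_col _)) // leq_mul2l card_T orbT.
Qed.

End FreeFixedPoints.

End FreeModule.

(* If U is stable under T and U T^k = 0, then dim U <= k dim (U :&: ker T):
   each application of T loses at most dim (U :&: ker T) dimensions. *)
Lemma rank_le_nilpotent (F : fieldType) d (T : 'M[F]_d) k :
  forall m (U : 'M[F]_(m, d)), (U *m T <= U)%MS -> U *m T ^+ k = 0 ->
  (\rank U <= k * \rank (U :&: kermx T))%N.
Proof.
elim: k => [|k IH] m U sUT; first by rewrite expr0 mulmx1 => ->; rewrite mxrank0.
rewrite exprS mulmxA => UT0.
have le_img := IH _ (U *m T) (submxMr T sUT) UT0.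
have le_ker : (\rank (U *m T :&: kermx T) <= \rank (U :&: kermx T))%N.
  exact/mxrankS/capmxS.
rewrite -(mxrank_mul_ker U T) mulSn addnC leq_add2l.
exact: leq_trans le_img (leq_mul (leqnn _) le_ker).
Qed.

(* In a p-group, p-th powers lie in every maximal subgroup, which is normal
   of index p. *)
Lemma p_maximal_expg (gT : finGroupType) (p : nat) (K L : {group gT}) x :
  (p.-group K)%g -> maximal L K -> x \in K -> (x ^+ p \in L)%g.
Proof.
move=> pK maxL Kx; have nsLK := p_maximal_normal pK maxL.
have nLx : x \in 'N(L)%g := subsetP (normal_norm nsLK) x Kx.
apply: coset_idr; first by rewrite groupX.
rewrite morphX // -(p_maximal_index pK maxL) -card_quotient ?normal_norm //.
by rewrite expg_cardG // mem_quotient.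
Qed.

(* A vector fixed by a maximal subgroup L of K and by some x in K \ L is
   fixed by K, since L and x generate K. *)
Lemma rfix_maximal (F : fieldType) (gT : finGroupType) (K L : {group gT}) d
    (rK : mx_representation F K d) m (V : 'M[F]_(m, d)) x :
  maximal L K -> x \in K -> x \notin L ->
  (V <= rfix_mx rK L)%MS -> V *m rK x = V -> (V <= rfix_mx rK K)%MS.
Proof.
move=> maxL Kx nLx fixL fixx; have [prLK maxLK] := maxgroupP maxL.
rewrite -rfix_mx_rstabC //.
have sLS : L \subset rstab rK V by rewrite rfix_mx_rstabC ?proper_sub.
case/eqVproper: (rstab_sub rK V) => [-> // | prS].
by case/negP: nLx; rewrite -(maxLK _ prS sLS) inE Kx fixx /=.
Qed.

Lemma mx_pFrobenius_sub1 (F : fieldType) p d (A : 'M[F]_d.+1) :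
  p \in [pchar F] -> (A - 1) ^+ p = A ^+ p - 1.
Proof.
move=> charFp; have charM : p \in [pchar 'M[F]_d.+1].
  case/andP: charFp => p_pr /eqP p0; apply/andP; split=> //.
  by apply/eqP/matrixP=> i j; rewrite mulmxnE !mxE -mulr_natr p0 mulr0.
by have := pFrobenius_autB_comm charM (commr1 A); rewrite /GRing.pFrobenius_aut expr1n.
Qed.

Section PGroupFixedPoints.
Variables (F : fieldType) (p : nat) (charFp : p \in [pchar F]) (gT : finGroupType).

(* From a maximal subgroup L of a p-group K to K, fixed points shrink by a
   factor at most p: for x in K \ L, x - 1 is nilpotent of order p on
   C_U(L), and its kernel there lies in C_U(K). *)
Lemma rfix_maximal_rank (K L : {group gT}) d (rK : mx_representation F K d)
    (U : 'M[F]_d) :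
  (p.-group K)%g -> maximal L K -> mxmodule rK U ->
  (\rank (U :&: rfix_mx rK L) <= p * \rank (U :&: rfix_mx rK K))%N.
Proof.
case: d rK U => [|d] rK U pK maxL modU.
  by rewrite (leq_trans (rank_leq_col _)).
have [prLK _] := maxgroupP maxL; have [_ [x Kx nLx]] := properP prLK.
set U' := (U :&: rfix_mx rK L)%MS; pose T := rK x - 1.
have modU' : mxmodule rK U'.
  exact/capmx_module/normal_rfix_mx_module/(p_maximal_normal pK maxL).
have sU'T : (U' *m T <= U')%MS.
  by rewrite mulmxBr mulmx1 addmx_sub ?(mxmoduleP modU' x Kx) // eqmx_opp.
have U'Tp : U' *m T ^+ p = 0.
  have /rfix_mxP fixU' : (U' <= rfix_mx rK L)%MS by apply: capmxSr.
  rewrite mx_pFrobenius_sub1 // -repr_mxX // mulmxBr mulmx1.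
  by rewrite fixU' ?subrr // (p_maximal_expg pK maxL).
apply: leq_trans (rank_le_nilpotent sU'T U'Tp) _.
rewrite leq_mul2l; apply/orP; right; apply: mxrankS.
rewrite sub_capmx (submx_trans (capmxSl _ _) (capmxSl _ _)) /=.
apply: (rfix_maximal maxL Kx nLx); first exact: submx_trans (capmxSl _ _) (capmxSr _ _).
have /sub_kermxP : (U' :&: kermx T <= kermx T)%MS by apply: capmxSr.
by rewrite mulmxBr mulmx1 => /eqP; rewrite subr_eq0 => /eqP.
Qed.

Lemma pgroup_rfix_rank (K : {group gT}) d (rK : mx_representation F K d)
    (U : 'M[F]_d) :
  (p.-group K)%g -> mxmodule rK U ->
  (\rank U <= #|K| * \rank (U :&: rfix_mx rK K))%N.
Proof.
move: {2}_.+1 (ltnSn #|K|) => m; elim: m => // m IH in K rK U *.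
move=> ltKm pK modU.
have [K1|[L maxL _]] := maximal_exists (sub1G K).
  rewrite -K1 cards1 mul1n mxrankS // sub_capmx submx_refl /=.
  by apply/rfix_mxP=> x; rewrite inE => /eqP->; rewrite repr_mx1 mulmx1.
have [prLK _] := maxgroupP maxL; have sLK := proper_sub prLK.
pose rL := subg_repr rK sLK.
have modUL : mxmodule rL U.
  by apply/mxmoduleP=> y Ly; apply: (mxmoduleP modU y (subsetP sLK y Ly)).
have ltL := leq_trans (proper_card prLK) ltKm.
have /leq_trans-> // := IH L rL U ltL (pgroupS sLK pK) modUL.
rewrite -(Lagrange sLK) (p_maximal_index pK maxL) -mulnA leq_mul2l.
by apply/orP; right; apply: rfix_maximal_rank.
Qed.

End PGroupFixedPoints.

(* Fixed points of a direct summand: if h : M -> X is a homomorphism split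
   by f : X -> M, then C_M(Q) h and C_{ker f}(Q) are independent subspaces
   of C_X(Q). *)
Lemma summand_rfix_rank (F : fieldType) (gT : finGroupType) (G Q : {group gT})
    n nX (rG : mx_representation F G n) (rX : mx_representation F G nX)
    (h : 'M[F]_(n, nX)) (f : 'M[F]_(nX, n)) :
  Q \subset G -> {in G, forall x, rG x *m h = h *m rX x} -> h *m f = 1%:M ->
  (\rank (rfix_mx rG Q) + \rank (kermx f :&: rfix_mx rX Q)
     <= \rank (rfix_mx rX Q))%N.
Proof.
move=> sQG hom_h hK; set E := rfix_mx rG Q *m h.
have free_h : row_free h by apply/row_freeP; exists f.
have sEC : (E <= rfix_mx rX Q)%MS.
  apply/rfix_mxP=> x Qx; rewrite -mulmxA -hom_h ?(subsetP sQG) // mulmxA.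
  by rewrite rfix_mx_id.
have dxE : (E :&: (kermx f :&: rfix_mx rX Q))%MS = 0.
  apply/eqP/rowV0P=> v; rewrite !sub_capmx => /and3P[/submxP[w ->] /sub_kermxP].
  by rewrite /E !mulmxA -mulmxA hK mulmx1 => -> _; rewrite mul0mx.
rewrite -(mxrankMfree _ free_h) -/E -(mxrank_disjoint_sum dxE) mxrankS //.
by rewrite addsmx_sub sEC capmxSr.
Qed.

Section Projective.
Variables (F : fieldType) (gT : finGroupType) (G : {group gT}) (n : nat).
Variables (rG : mx_representation F G n) (projM : mx_projective rG).

(* Being a direct summand of X, a projective module is injective relative
   to every subgroup K. *)
Lemma proj_rel_injective (K : {group gT}) (sKG : K \subset G) a b
    (rA : mx_representation F K a) (rB : mx_representation F K b)
    (i : 'M[F]_(a, b)) (phi : 'M[F]_(a, n)) :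
    row_free i -> {in K, forall x, rA x *m i = i *m rB x} ->
    {in K, forall x, rA x *m phi = phi *m rG x} ->
  exists2 psi : 'M[F]_(b, n),
    {in K, forall x, rB x *m psi = psi *m rG x} & i *m psi = phi.
Proof.
move=> free_i hom_i hom_phi; have [h hom_h hK] := proj_free_summand projM.
have hom_phih : {in K, forall x, rA x *m (phi *m h) = phi *m h *m free_mx F G n x}.
  by move=> x Kx; rewrite [LHS]mulmxA hom_phi // -!mulmxA hom_h ?(subsetP sKG).
have [psi hom_psi ext_psi] := free_rel_injective sKG free_i hom_i hom_phih.
exists (psi *m aug_mx rG) => [x Kx|]; last by rewrite mulmxA ext_psi -mulmxA hK mulmx1.
by rewrite [LHS]mulmxA hom_psi // -!mulmxA aug_mx_hom ?(subsetP sKG).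
Qed.

(* |Q| dim C_M(Q) <= dim M for a p-subgroup Q: in X = M h (+) ker f we
   have dim C_X(Q) <= n |G : Q| and dim ker f <= |Q| dim C_{ker f}(Q),
   with dim ker f = n |G| - n. *)
Lemma proj_pgroup_rfix_bound p (charFp : p \in [pchar F]) (Q : {group gT}) :
  Q \subset G -> (p.-group Q)%g -> (#|Q| * \rank (rfix_mx rG Q) <= n)%N.
Proof.
move=> sQG pQ; have [h hom_h hK] := proj_free_summand projM.
set f := aug_mx rG; set C := rfix_mx (free_repr F G n) Q.
have rk_ker : \rank (kermx f) = (n * #|G| - n)%N.
  by rewrite mxrank_ker (eqP (aug_mx_full rG)).
have mod_ker : mxmodule (subg_repr (free_repr F G n) sQG) (kermx f).
  by apply: (kermx_hom_mxmodule (rB := rG)) => x Qx; apply/aug_mx_hom/(subsetP sQG).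
have le_ker : (\rank (kermx f) <= #|Q| * \rank (kermx f :&: C))%N.
  exact (pgroup_rfix_rank charFp pQ mod_ker).
have le_sum := summand_rfix_rank sQG hom_h hK.
have le_sum_free : (#|Q| * \rank (rfix_mx rG Q) + #|Q| * \rank (kermx f :&: C)
                      <= n * (#|Q| * #|G : Q|%g))%N.
  rewrite -mulnDr mulnCA leq_mul2l.
  by rewrite (leq_trans le_sum) ?orbT ?free_rfix_rank.
move: le_ker le_sum_free; rewrite rk_ker (Lagrange sQG); lia.
Qed.

End Projective.

Section SubmoduleInclusion.
Variables (F : fieldType) (gT : finGroupType) (G : {group gT}) (n : nat).
Variables (rG : mx_representation F G n) (U : 'M[F]_n).

Lemma val_submod1_free : row_free (val_submod 1%:M : 'M_(\rank U, n)).
Proof. by rewrite /row_free val_submod1. Qed.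

Lemma val_submod1_hom (modU : mxmodule rG U) x : x \in G ->
  submod_repr modU x *m val_submod 1%:M = val_submod 1%:M *m rG x.
Proof. by move=> Gx; rewrite -(val_submodJ modU 1%:M Gx) mul1mx [RHS]val_submodE. Qed.

End SubmoduleInclusion.

(* A homomorphism is injective as soon as it is injective on the socle S
   (spanned by the rows of i): otherwise its kernel, a nonzero submodule,
   contains a simple submodule, which lies in S. *)
Lemma socle_injective (F : fieldType) (gT : finGroupType) (G : {group gT}) n
    (rG : mx_representation F G n) (S : 'M[F]_n) k b (i : 'M[F]_(k, n))
    (psi : 'M[F]_(n, b)) :
    mxsocle rG 1%:M S -> (i :=: S)%MS -> row_free (i *m psi) ->
  mxmodule rG (kermx psi) -> row_free psi.
Proof.
case=> _ _ socS defS free_ipsi mod_ker; rewrite -kermx_eq0; case: eqP => // /eqP nzK.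
apply: (mxsimple_exists mod_ker nzK) => -[V simV sVK].
have /submxP[W defV] : (V <= i)%MS by rewrite defS socS ?submx1.
case: simV => _ nzV _; rewrite -(negbTE nzV); move/sub_kermxP: sVK.
by rewrite defV -mulmxA => /eqP; rewrite mulmx_free_eq0 // => /eqP->; rewrite mul0mx.
Qed.

Section FixedPointQuotient.
Variables (F : fieldType) (gT : finGroupType) (G H N : {group gT}) (n : nat).
Variables (rG : mx_representation F G n) (sHG : H \subset G) (nsNH : (N <| H)%g).

Lemma fixquo_coset (U : 'M[F]_n) (modU : mxmodule rG U) x : x \in H ->
  fixquo sHG nsNH modU (coset N x) = submod_repr (fixmx_module sHG nsNH modU) x.
Proof. exact: quo_repr_coset. Qed.

Variables (m : nat) (rM : mx_representation F (H / N)%g m) (psi : 'M[F]_(m, n)).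
Hypothesis hom_psi : {in H, forall x, rM (coset N x) *m psi = psi *m rG x}.

(* N acts trivially on M, hence on the image of psi. *)
Lemma hom_quo_rfix : (psi <= rfix_mx rG N)%MS.
Proof.
apply/rfix_mxP=> x Nx; have Hx := subsetP (normal_sub nsNH) x Nx.
by rewrite -hom_psi // coset_id // repr_mx1 mul1mx.
Qed.

Lemma hom_quo_kermx_module : mxmodule rM (kermx psi).
Proof.
apply/mxmoduleP=> _ /morphimP[x _ Hx ->]; apply/sub_kermxP.
by rewrite -mulmxA hom_psi // mulmxA mulmx_ker mul0mx.
Qed.

Lemma fixquo_embedding : row_free psi ->
  exists U : 'M[F]_(\rank (fixmx N rG sHG 1%:M)),
    exists modU : mxmodule (fixquo sHG nsNH (mxmodule1 rG)) U,
      mx_rsim (submod_repr modU) rM.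
Proof.
move=> free_psi; set RW := fixquo sHG nsNH (mxmodule1 rG).
have psiW : (psi <= fixmx N rG sHG 1%:M)%MS.
  by rewrite sub_capmx submx1; apply: hom_quo_rfix.
pose Psi := in_submod (fixmx N rG sHG 1%:M) psi.
have hom_Psi y : y \in (H / N)%g -> rM y *m Psi = Psi *m RW y.
  case/morphimP=> x _ Hx ->; rewrite fixquo_coset // /Psi -(in_submodJ (fixmx_module sHG nsNH (mxmodule1 rG)) x psiW).
  have -> : psi *m subg_repr rG sHG x = rM (coset N x) *m psi by rewrite hom_psi.
  by rewrite [RHS]in_submodE [in_submod _ psi]in_submodE mulmxA.
have free_Psi : row_free Psi by rewrite /row_free mxrank_in_submod.
have modPsi : mxmodule RW Psi.
  by apply/mxmoduleP=> y Hy; rewrite -hom_Psi // submxMl.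
have modU : mxmodule RW <<Psi>>%MS by rewrite (eqmx_module _ (genmxE Psi)).
have sPsiU : (Psi <= <<Psi>>)%MS by rewrite genmxE.
exists <<Psi>>%MS, modU; apply: mx_rsim_sym; exists (in_submod <<Psi>>%MS Psi).
- by rewrite genmxE; move/eqP: free_Psi.
- by rewrite /row_free mxrank_in_submod.
move=> y Hy; rewrite -(in_submodJ modU y sPsiU) -hom_Psi //.
by rewrite [RHS]in_submodE [in_submod _ Psi]in_submodE mulmxA.
Qed.

End FixedPointQuotient.

Lemma partn_sylow_quotient (gT : finGroupType) (p : nat) (G H N P : {group gT}) :
  (p.-Sylow(G) P)%g -> P \subset H -> H \subset G ->
  (p.-group N)%g -> (N <| H)%g -> (#|G|`_p = #|N| * #|(H / N)%g|`_p)%N.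
Proof.
move=> sylP sPH sHG pN nsNH; have sylH := pHall_subl sPH sHG sylP.
rewrite -(card_Hall sylP) (card_Hall sylH) -(Lagrange (normal_sub nsNH)).
by rewrite -card_quotient ?normal_norm // partnM ?cardG_gt0 // part_pnat_id.
Qed.

Theorem lemma3p9 (p : nat) (F : closedFieldType) (charF : p \in [pchar F])
  (gT : finGroupType) (G H : {group gT}) (sHG : H \subset G)
  (P : {group gT}) (sylP : (p.-Sylow(G) P)%g) (sPH : P \subset H)
  (n : nat) (rG : mx_representation F G n) (projM : mx_projective rG)
  (S : 'M[F]_n) (socS : mxsocle rG 1%:M S)
  (D : 'M[F]_(\rank (fixmx ('O_p(H))%G rG sHG S)))
  (socD : mxsocle (fixquo sHG (pcore_normal p H) (mxsocle_module socS)) 1%:M D)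
  (m' : nat) (rM' : mx_representation F (H / ('O_p(H))%g)%g m')
  (projM' : mx_projective rM')
  (S' : 'M[F]_m') (socS' : mxsocle rM' 1%:M S')
  (isoS' : mx_rsim (submod_repr (mxsocle_module socS'))
                   (submod_repr (mxsocle_module socD))) :
  (exists U : 'M[F]_(\rank (fixmx ('O_p(H))%G rG sHG 1%:M)),
     exists modU : mxmodule (fixquo sHG (pcore_normal p H) (mxmodule1 rG)) U,
       mx_rsim (submod_repr modU) rM')
  /\ (m' * #|G|`_p <= n * #|(H / ('O_p(H))%g)%g|`_p)%N.
Proof.
pose N := ('O_p(H))%G; pose nsNH := pcore_normal p H.
have nNH := normal_norm nsNH; have pN : (p.-group N)%g := pcore_pgroup p H.
have sNG := subset_trans (normal_sub nsNH) sHG.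
set modS' := mxsocle_module socS'; set fixS := fixmx_module sHG nsNH (mxsocle_module socS).
(* phi : soc M' ~ D <= C_S(N) <= M, an H-homomorphism *)
have [B _ freeB homB] := isoS'.
pose phi := B *m @val_submod _ _ D _ 1%:M *m @val_submod _ _ (fixmx N rG sHG S) _ 1%:M.
have hom_phi : {in H, forall x, submod_repr modS' (coset N x) *m phi = phi *m rG x}.
  apply: hom_mx_comp; first apply: hom_mx_comp.
  - by move=> x Hx; apply/homB/mem_quotient.
  - by move=> x Hx; rewrite val_submod1_hom ?mem_quotient.
  - move=> x Hx /=; rewrite -(val_submod1_hom fixS Hx); congr (_ *m _).
    exact: fixquo_coset.
have hom_i : {in H, forall x, submod_repr modS' (coset N x) *m val_submod 1%:M
                                = val_submod 1%:M *m rM' (coset N x)}.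
  by move=> x Hx; rewrite val_submod1_hom ?mem_quotient.
(* extend phi along soc M' <= M' to psi : M' -> M *)
have [psi hom_psi ext_psi] := proj_rel_injective projM sHG
  (rA := morphim_repr (submod_repr modS') nNH) (rB := morphim_repr rM' nNH)
  (val_submod1_free S') hom_i hom_phi.
have free_psi : row_free psi.
  apply: (socle_injective socS' (val_submod1 S')); last exact: hom_quo_kermx_module hom_psi.
  by rewrite ext_psi /row_free /phi !mxrankMfree ?val_submod1_free.
split; first exact: fixquo_embedding hom_psi free_psi.
(* m' <= dim C_M(N) <= n / |N|, and |G|_p = |N| |H/N|_p *)
rewrite (partn_sylow_quotient sylP sPH sHG pN nsNH) mulnA leq_mul2r; apply/orP; right.
rewrite mulnC (leq_trans _ (proj_pgroup_rfix_bound projM charF sNG pN)) // leq_mul2l.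
apply/orP; right; rewrite -(eqP free_psi) mxrankS //.
exact: (hom_quo_rfix (rM := rM') nsNH hom_psi).
Qed.
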